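(* Let $(\lambda^*,\mathbf{s}^{-*},\mathbf{s}^{+*},\delta^*,\boldsymbol{\alpha}^*,\gamma^* )$ be an optimal solution of model (MIP) (defined in the context). Then $\lambda^*/\delta^*$ is a maximal element of $\Omega_o$, i.e. $\lambda^*/\delta^*\in\Omega_o$ and it has the maximum number of positive components among all elements of $\Omega_o$.
   Context: Data envelopment analysis setting. There are $n$ decision making units (DMUs) indexed by $J=\{1,\dots,n\}$, each using $m$ inputs to produce $s$ outputs; DMU$_j$ has input vector $\mathbf{x}_j=(x_{1j},\dots,x_{mj})^T\in\mathbb{R}^m_+$ and output vector $\mathbf{y}_j=(y_{1j},\dots,y_{sj})^T\in\mathbb{R}^s_+$; $\mathbf{X}=[\mathbf{x}_1\cdots\mathbf{x}_n]$, $\mathbf{Y}=[\mathbf{y}_1\cdots\mathbf{y}_n]$. Define $\mathbf{R}^-=(R^-_1,\dots,R^-_m)^T$, $\mathbf{R}^+=(R^+_1,\dots,R^+_s)^T$ by $1/R^-_i=\max_{j}x_{ij}-\min_j x_{ij}$ and $1/R^+_r=\max_j y_{rj}-\min_j y_{rj}$. For $o\in J$, the RAM model is: $\rho_o=\min\, 1-\frac{1}{m+s}(\mathbf{R}^{-T}\mathbf{s}^-+\mathbf{R}^{+T}\mathbf{s}^+)$ subject to $\mathbf{X}\lambda+\mathbf{s}^-=\mathbf{x}_o$, $\mathbf{Y}\lambda-\mathbf{s}^+=\mathbf{y}_o$, $\mathbf{1}^T\lambda=1$, $\lambda\ge 0,\mathbf{s}^-\ge0,\mathbf{s}^+\ge0$.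 A DMU is RAM-efficient if its optimal value $\rho$ equals $1$; let $E\subseteq J$ be the index set of RAM-efficient DMUs and $\mathbf{X}_E,\mathbf{Y}_E$ the submatrices of $\mathbf{X},\mathbf{Y}$ with columns in $E$. Fix the evaluated DMU $o\in J$. System (S): vectors $\lambda\in\mathbb{R}^{|E|}$, $\mathbf{s}^-\in\mathbb{R}^m$, $\mathbf{s}^+\in\mathbb{R}^s$, all nonnegative, with $\mathbf{X}_E\lambda+\mathbf{s}^-=\mathbf{x}_o$, $\mathbf{Y}_E\lambda-\mathbf{s}^+=\mathbf{y}_o$, $\mathbf{1}^T\lambda=1$, $\mathbf{R}^{-T}\mathbf{s}^-+\mathbf{R}^{+T}\mathbf{s}^+=(m+s)(1-\rho_o)$. Let $\Omega_o$ be the set of all $\lambda$ for which there exist $\mathbf{s}^-,\mathbf{s}^+$ such that $(\lambda,\mathbf{s}^-,\mathbf{s}^+)$ satisfies (S). A maximal element of $\Omega_o$ is an element of $\Omega_o$ with the maximum number of positive components. Model (MIP): maximize $\mathbf{1}^T\boldsymbol{\alpha}+\gamma$ over $\lambda\in\mathbb{R}^{|E|}$, $\mathbf{s}^-\in\mathbb{R}^m$, $\mathbf{s}^+\in\mathbb{R}^s$, $\delta\in\mathbb{R}$, $\boldsymbol{\alpha}\in\{0,1\}^{|E|}$, $\gamma\in\{0,1\}$ subject to $\mathbf{X}_E\lambda+\mathbf{s}^--\mathbf{x}_o\delta=\mathbf{0}$, $\mathbf{Y}_E\lambda-\mathbf{s}^+-\mathbf{y}_o\delta=\mathbf{0}$,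 $\mathbf{1}^T\lambda-\delta=0$, $\mathbf{R}^{-T}\mathbf{s}^-+\mathbf{R}^{+T}\mathbf{s}^+-(m+s)(1-\rho_o)\delta=0$, $\boldsymbol{\alpha}\le\lambda$, $\gamma\le\delta$, $\lambda\ge\mathbf{0}$, $\mathbf{s}^-\ge\mathbf{0}$, $\mathbf{s}^+\ge\mathbf{0}$, $\delta\ge0$. *)

From mathcomp Require Import all_boot all_order all_algebra.
Unset Printing Implicit Defensive.
Import Order.TTheory GRing.Theory Num.Theory.
Local Open Scope ring_scope.

(* DEA data: X : m inputs x n DMUs, Y : s outputs x n DMUs.
   Column j of X (resp. Y) is x_j (resp. y_j). *)

(* max_j a_j - min_j a_j, written as max over pairs of a_j - a_k
   (identical value; 0 when n = 0). *)
Definition range_row {R : realFieldType} {n : nat} (a : 'I_n -> R) : R :=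
  \big[Num.max/0]_(j < n) \big[Num.max/0]_(k < n) (a j - a k).

Definition Rminus {R : realFieldType} {m n : nat} (X : 'M[R]_(m, n)) (i : 'I_m) : R :=
  (range_row (fun j => X i j))^-1.

Definition Rplus {R : realFieldType} {s n : nat} (Y : 'M[R]_(s, n)) (r : 'I_s) : R :=
  (range_row (fun j => Y r j))^-1.

Definition weighted_slack {R : realFieldType} {m s n : nat}
  (X : 'M[R]_(m, n)) (Y : 'M[R]_(s, n)) (sm : 'I_m -> R) (sp : 'I_s -> R) : R :=
  \sum_(i < m) Rminus X i * sm i + \sum_(r < s) Rplus Y r * sp r.

Definition ram_feasible {R : realFieldType} {m s n : nat}
  (X : 'M[R]_(m, n)) (Y : 'M[R]_(s, n)) (o : 'I_n)
  (lam : 'I_n -> R) (sm : 'I_m -> R) (sp : 'I_s -> R) : Prop :=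
  [/\ (forall j, 0 <= lam j), (forall i, 0 <= sm i) & (forall r, 0 <= sp r)] /\
  [/\ (forall i, \sum_(j < n) X i j * lam j + sm i = X i o),
      (forall r, \sum_(j < n) Y r j * lam j - sp r = Y r o)
    & \sum_(j < n) lam j = 1].

Definition ram_obj {R : realFieldType} {m s n : nat}
  (X : 'M[R]_(m, n)) (Y : 'M[R]_(s, n)) (sm : 'I_m -> R) (sp : 'I_s -> R) : R :=
  1 - weighted_slack X Y sm sp / (m + s)%:R.

Definition ram_value {R : realFieldType} {m s n : nat}
  (X : 'M[R]_(m, n)) (Y : 'M[R]_(s, n)) (o : 'I_n) (rho : R) : Prop :=
  (exists lam sm sp, ram_feasible X Y o lam sm sp /\ ram_obj X Y sm sp = rho) /\
  (forall lam sm sp, ram_feasible X Y o lam sm sp -> rho <= ram_obj X Y sm sp).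

Definition ram_efficient {R : realFieldType} {m s n : nat}
  (X : 'M[R]_(m, n)) (Y : 'M[R]_(s, n)) (j : 'I_n) : Prop :=
  ram_value X Y j 1.

Definition Eidx {n : nat} (E : {set 'I_n}) : finType := {j : 'I_n | j \in E}.

Definition system_S {R : realFieldType} {m s n : nat}
  (X : 'M[R]_(m, n)) (Y : 'M[R]_(s, n)) (E : {set 'I_n}) (o : 'I_n) (rho : R)
  (lam : Eidx E -> R) (sm : 'I_m -> R) (sp : 'I_s -> R) : Prop :=
  [/\ (forall k, 0 <= lam k), (forall i, 0 <= sm i) & (forall r, 0 <= sp r)] /\
  [/\ (forall i, \sum_(k : Eidx E) X i (val k) * lam k + sm i = X i o),
      (forall r, \sum_(k : Eidx E) Y r (val k) * lam k - sp r = Y r o),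
      \sum_(k : Eidx E) lam k = 1
    & weighted_slack X Y sm sp = (m + s)%:R * (1 - rho)].

Definition in_Omega {R : realFieldType} {m s n : nat}
  (X : 'M[R]_(m, n)) (Y : 'M[R]_(s, n)) (E : {set 'I_n}) (o : 'I_n) (rho : R)
  (lam : Eidx E -> R) : Prop :=
  exists sm sp, system_S X Y E o rho lam sm sp.

Definition npos {R : realFieldType} {n : nat} {E : {set 'I_n}} (lam : Eidx E -> R) : nat :=
  #|[pred k : Eidx E | 0 < lam k]|.

Definition maximal_in_Omega {R : realFieldType} {m s n : nat}
  (X : 'M[R]_(m, n)) (Y : 'M[R]_(s, n)) (E : {set 'I_n}) (o : 'I_n) (rho : R)
  (lam : Eidx E -> R) : Prop :=
  in_Omega X Y E o rho lam /\
  forall lam', in_Omega X Y E o rho lam' -> (npos lam' <= npos lam)%N.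

(* Feasible set of model (MIP); alpha in {0,1}^|E|, gamma in {0,1} as bools. *)
Definition mip_feasible {R : realFieldType} {m s n : nat}
  (X : 'M[R]_(m, n)) (Y : 'M[R]_(s, n)) (E : {set 'I_n}) (o : 'I_n) (rho : R)
  (lam : Eidx E -> R) (sm : 'I_m -> R) (sp : 'I_s -> R) (delta : R)
  (alpha : Eidx E -> bool) (gamma : bool) : Prop :=
  [/\ (forall i, \sum_(k : Eidx E) X i (val k) * lam k + sm i - X i o * delta = 0),
      (forall r, \sum_(k : Eidx E) Y r (val k) * lam k - sp r - Y r o * delta = 0),
      \sum_(k : Eidx E) lam k - delta = 0
    & weighted_slack X Y sm sp - (m + s)%:R * (1 - rho) * delta = 0] /\
  [/\ (forall k, (alpha k)%:R <= lam k) & (gamma%:R <= delta)] /\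
  [/\ (forall k, 0 <= lam k), (forall i, 0 <= sm i), (forall r, 0 <= sp r)
    & 0 <= delta].

Definition mip_obj {n : nat} {E : {set 'I_n}} (alpha : Eidx E -> bool) (gamma : bool) : nat :=
  (\sum_(k : Eidx E) (alpha k : nat) + gamma)%N.

Definition mip_optimal {R : realFieldType} {m s n : nat}
  (X : 'M[R]_(m, n)) (Y : 'M[R]_(s, n)) (E : {set 'I_n}) (o : 'I_n) (rho : R)
  (lam : Eidx E -> R) (sm : 'I_m -> R) (sp : 'I_s -> R) (delta : R)
  (alpha : Eidx E -> bool) (gamma : bool) : Prop :=
  mip_feasible X Y E o rho lam sm sp delta alpha gamma /\
  forall lam' sm' sp' delta' alpha' gamma',
    mip_feasible X Y E o rho lam' sm' sp' delta' alpha' gamma' ->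
    (mip_obj alpha' gamma' <= mip_obj alpha gamma)%N.

(** An optimal solution of the RAM model for o is supported on efficient
    DMUs: if a DMU j carrying positive weight had a representation with RAM
    objective below 1, substituting it for j would lower the optimum rho.
    Hence Omega_o is nonempty.  Model (MIP) is the homogenization of (S):
    scaling an element of Omega_o so that its positive entries are at least 1
    gives a MIP-feasible point of objective (number of positive entries) + 1,
    and conversely a MIP-feasible point with delta > 0 divided by delta lies
    in Omega_o, with the same support and objective at most that support size
    plus gamma.  Nonemptiness of Omega_o makes the optimal objective positive,
    which forces delta > 0, and comparing objectives gives maximality. *)

From mathcomp Require Import all_boot all_order all_algebra.
From mathcomp Require Import ring.
Import Order.TTheory GRing.Theory Num.Theory.
Local Open Scope ring_scope.

Lemma sum_Eidx {V : nmodType} {n} {E : {set 'I_n}} {F : 'I_n -> V} :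
  (forall j, j \notin E -> F j = 0) -> \sum_(k : Eidx E) F (val k) = \sum_j F j.
Proof.
move=> F_out; rewrite /Eidx -(big_sub (mem E)) big_mkcond /=.
by apply: eq_bigr => j _; case: ifP => // /negbT /F_out ->.
Qed.

Lemma exists_scale_ge1 {R : realFieldType} {I : finType} {l : I -> R} :
  (forall k, 0 <= l k) -> exists2 t, 1 <= t & forall k, 0 < l k -> 1 <= l k * t.
Proof.
move=> l_ge0; have inv_ge0 k : 0 <= (l k)^-1 by rewrite invr_ge0.
exists (1 + \sum_k (l k)^-1) => [|k lk_gt0]; first by rewrite lerDl sumr_ge0.
rewrite -[leLHS](mulVf (lt0r_neq0 lk_gt0)) mulrC ler_pM2l // (bigD1 k) //= addrCA lerDl.
by rewrite addr_ge0 // sumr_ge0.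
Qed.

Section RamModel.
Context {R : realFieldType} {m s n : nat} {X : 'M[R]_(m, n)} {Y : 'M[R]_(s, n)}.

Lemma weighted_slack0 : weighted_slack X Y (fun _ => 0) (fun _ => 0) = 0.
Proof. by rewrite /weighted_slack !big1 ?addr0 // => i _; rewrite mulr0. Qed.

Lemma weighted_slackZ sm sp t :
  weighted_slack X Y (fun i => sm i * t) (fun r => sp r * t) =
  weighted_slack X Y sm sp * t.
Proof.
rewrite /weighted_slack mulrDl !mulr_suml.
by congr (_ + _); apply: eq_bigr => i _; rewrite mulrA.
Qed.

Lemma weighted_slackDZ sm sp tm tp c :
  weighted_slack X Y (fun i => sm i + c * tm i) (fun r => sp r + c * tp r) =
  weighted_slack X Y sm sp + c * weighted_slack X Y tm tp.
Proof.
rewrite /weighted_slack mulrDr !mulr_sumr addrACA -!big_split /=.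
by congr (_ + _); apply: eq_bigr => i _; rewrite mulrDr mulrCA.
Qed.

Lemma weighted_slack_ram_obj sm sp :
  weighted_slack X Y sm sp = (m + s)%:R * (1 - ram_obj X Y sm sp).
Proof.
rewrite /ram_obj opprB addrCA subrr addr0.
have [ms0 | ms_gt0] := posnP (m + s); last by rewrite mulrC divfK // pnatr_eq0 -lt0n.
(* [ram_obj] divides by [0] here, but there are no slacks at all. *)
rewrite ms0 mul0r; move/eqP: ms0; rewrite addn_eq0 => /andP[/eqP m0 /eqP s0].
rewrite /weighted_slack !big1 ?addr0 // => [r|i] _.
  by have s_gt0 : (0 < s)%N := leq_ltn_trans (leq0n r) (ltn_ord r); rewrite s0 in s_gt0.
by have m_gt0 : (0 < m)%N := leq_ltn_trans (leq0n i) (ltn_ord i); rewrite m0 in m_gt0.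
Qed.

Lemma ram_objDZ sm sp tm tp c :
  ram_obj X Y (fun i => sm i + c * tm i) (fun r => sp r + c * tp r) =
  ram_obj X Y sm sp - c * (1 - ram_obj X Y tm tp).
Proof.
rewrite /ram_obj weighted_slackDZ opprB addrCA subrr addr0 mulrDl.
by rewrite opprD addrA mulrA.
Qed.

Lemma sum_mul_delta (F : 'I_n -> R) j : \sum_k F k * (k == j)%:R = F j.
Proof.
by rewrite (bigD1 j) //= eqxx mulr1 big1 ?addr0 // => k /negbTE ->; rewrite mulr0.
Qed.

Lemma ram_feasible_self j :
  ram_feasible X Y j (fun k => (k == j)%:R) (fun _ => 0) (fun _ => 0).
Proof.
split; first by split => // k; rewrite ler0n.
split=> [i|r|]; first by rewrite sum_mul_delta addr0.
  by rewrite sum_mul_delta subr0.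
by rewrite -[RHS](sum_mul_delta (fun=> 1) j); apply: eq_bigr => k _; rewrite mul1r.
Qed.

Lemma ram_obj0 : ram_obj X Y (fun _ => 0) (fun _ => 0) = 1.
Proof. by rewrite /ram_obj weighted_slack0 mul0r subr0. Qed.

Lemma ram_feasible_subst {o j lam sm sp mu tm tp} :
  ram_feasible X Y o lam sm sp -> ram_feasible X Y j mu tm tp ->
  ram_feasible X Y o (fun k => lam k - lam j * (k == j)%:R + lam j * mu k)
    (fun i => sm i + lam j * tm i) (fun r => sp r + lam j * tp r).
Proof.
move=> [[lam_ge0 sm_ge0 sp_ge0] [Xlam Ylam sum_lam]].
move=> [[mu_ge0 tm_ge0 tp_ge0] [Xmu Ymu sum_mu]].
have subst_sum (Z : 'I_n -> R) :
    \sum_k Z k * (lam k - lam j * (k == j)%:R + lam j * mu k) =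
    \sum_k Z k * lam k - lam j * Z j + lam j * \sum_k Z k * mu k.
  rewrite -[lam j * Z j](sum_mul_delta (fun k => lam j * Z k)) mulr_sumr.
  rewrite -sumrB -big_split /=; apply: eq_bigr => k _.
  by rewrite !mulrDr mulrN !mulrA [Z k * lam j]mulrC.
split; first split.
- move=> k; apply: addr_ge0; last exact: mulr_ge0.
  by case: eqP => [->|_]; rewrite ?mulr1 ?subrr // mulr0 subr0.
- by move=> i; apply: addr_ge0; last exact: mulr_ge0.
- by move=> r; apply: addr_ge0; last exact: mulr_ge0.
split.
- move=> i; rewrite subst_sum.
  rewrite -[\sum_k X i k * lam k](addrK (sm i)) Xlam.
  rewrite -[\sum_k X i k * mu k](addrK (tm i)) Xmu; ring.
- move=> r; rewrite subst_sum.
  rewrite -[\sum_k Y r k * lam k](subrK (sp r)) Ylam.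
  rewrite -[\sum_k Y r k * mu k](subrK (tp r)) Ymu; ring.
- rewrite big_split sumrB /= (sum_mul_delta (fun=> lam j)) -mulr_sumr.
  by rewrite sum_lam sum_mu mulr1 subrK.
Qed.

Lemma ram_efficient_support {o rho lam sm sp j} :
  ram_value X Y o rho -> ram_feasible X Y o lam sm sp ->
  ram_obj X Y sm sp = rho -> 0 < lam j -> ram_efficient X Y j.
Proof.
move=> [_ rho_min] feas obj_rho lam_j_gt0; split.
  exists (fun k => (k == j)%:R), (fun=> 0), (fun=> 0).
  by split; [exact: ram_feasible_self | exact: ram_obj0].
move=> mu tm tp feas_mu; rewrite leNgt; apply/negP => obj_lt1.
have := rho_min _ _ _ (ram_feasible_subst feas feas_mu).
rewrite ram_objDZ obj_rho lerDl oppr_ge0 leNgt => /negP; apply.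
by rewrite mulr_gt0 // subr_gt0.
Qed.

Section MaximalSupport.
Context {E : {set 'I_n}} {o : 'I_n} {rho : R}.

(* The equality constraints of (MIP); (S) is their slice [delta = 1]. *)
Definition homogenized_S (lam : Eidx E -> R) (sm : 'I_m -> R) (sp : 'I_s -> R)
    (delta : R) : Prop :=
  [/\ (forall i, \sum_(k : Eidx E) X i (val k) * lam k + sm i - X i o * delta = 0),
      (forall r, \sum_(k : Eidx E) Y r (val k) * lam k - sp r - Y r o * delta = 0),
      \sum_(k : Eidx E) lam k - delta = 0
    & weighted_slack X Y sm sp - (m + s)%:R * (1 - rho) * delta = 0].

Lemma homogenized_SZ {lam sm sp delta} t :
  homogenized_S lam sm sp delta ->
  homogenized_S (fun k => lam k * t) (fun i => sm i * t) (fun r => sp r * t) (delta * t).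
Proof.
have sumZ (Z : Eidx E -> R) : \sum_k Z k * (lam k * t) = (\sum_k Z k * lam k) * t.
  by rewrite mulr_suml; apply: eq_bigr => k _; rewrite mulrA.
move=> [Xe Ye Se We]; split.
- by move=> i; rewrite sumZ !mulrA -mulrDl -mulrBl Xe mul0r.
- by move=> r; rewrite sumZ !mulrA -mulrBl -mulrBl Ye mul0r.
- by rewrite -mulr_suml -mulrBl Se mul0r.
- by rewrite weighted_slackZ mulrA -mulrBl We mul0r.
Qed.

Lemma system_S_homogenized lam sm sp :
  system_S X Y E o rho lam sm sp <->
  [/\ (forall k, 0 <= lam k), (forall i, 0 <= sm i) & (forall r, 0 <= sp r)] /\
  homogenized_S lam sm sp 1.
Proof.
have subr1_eq (a b : R) : a - b * 1 = 0 -> a = b by rewrite mulr1 => /subr0_eq.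
split=> -[nonneg [Xe Ye Se We]]; split=> //; split.
- by move=> i; rewrite Xe mulr1 subrr.
- by move=> r; rewrite Ye mulr1 subrr.
- by rewrite Se subrr.
- by rewrite We mulr1 subrr.
- by move=> i; apply: subr1_eq.
- by move=> r; apply: subr1_eq.
- exact: subr0_eq.
- exact: subr1_eq.
Qed.

Lemma npos_sum (l : Eidx E -> R) : npos l = (\sum_k ((0 < l k)%R : nat))%N.
Proof.
rewrite /npos -sum1_card big_mkcond /=.
by apply: eq_bigr => k _; rewrite inE; case: ifP.
Qed.

Lemma npos_mulr (l : Eidx E -> R) t : 0 < t -> npos (fun k => l k * t) = npos l.
Proof. by move=> t_gt0; apply: eq_card => k; rewrite !inE pmulr_lgt0. Qed.

Lemma ram_optimal_in_Omega :
  ram_value X Y o rho -> (forall j, ram_efficient X Y j -> j \in E) ->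
  exists l, in_Omega X Y E o rho l.
Proof.
move=> ram_rho effE; have [[lam [sm [sp [feas obj_rho]]]] _] := ram_rho.
have [[lam_ge0 sm_ge0 sp_ge0] [Xe Ye Se]] := feas.
have lam_out j : j \notin E -> lam j = 0.
  move=> jE; apply/eqP; rewrite eq_le lam_ge0 andbT leNgt; apply: contra jE.
  by move=> /(ram_efficient_support ram_rho feas obj_rho); apply: effE.
have mul_out (Z : 'I_n -> R) j : j \notin E -> Z j * lam j = 0.
  by move=> /lam_out ->; rewrite mulr0.
exists (fun k => lam (val k)), sm, sp; split; first by split.
split=> [i|r||].
- by rewrite (sum_Eidx (mul_out (X i))).
- by rewrite (sum_Eidx (mul_out (Y r))).
- by rewrite (sum_Eidx lam_out).
- by rewrite weighted_slack_ram_obj obj_rho.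
Qed.

Lemma mip_feasible_of_Omega {l} :
  in_Omega X Y E o rho l ->
  exists lam sm sp delta alpha,
    mip_feasible X Y E o rho lam sm sp delta alpha true /\
    mip_obj alpha true = (npos l).+1.
Proof.
move=> [sm [sp /system_S_homogenized [[l_ge0 sm_ge0 sp_ge0] eqs]]].
have [t t_ge1 lt_ge1] := exists_scale_ge1 l_ge0.
have t_ge0 : 0 <= t := le_trans ler01 t_ge1.
exists (fun k => l k * t), (fun i => sm i * t), (fun r => sp r * t), t, (fun k => 0 < l k).
split; last by rewrite /mip_obj npos_sum addn1.
split; first by have := homogenized_SZ t eqs; rewrite mul1r.
split; last by split=> [k|i|r|//]; apply: mulr_ge0; rewrite ?l_ge0 ?sm_ge0 ?sp_ge0.
split=> // k; have [/lt_ge1 //|_] := boolP (0 < l k).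
exact: mulr_ge0.
Qed.

Lemma mip_obj_le_npos {lam sm sp delta alpha gamma} :
  mip_feasible X Y E o rho lam sm sp delta alpha gamma ->
  (mip_obj alpha gamma <= npos lam + gamma)%N.
Proof.
move=> [_ [[alpha_le _] _]]; rewrite /mip_obj npos_sum leq_add2r leq_sum // => k _.
by case: (alpha k) (alpha_le k) => //= /(lt_le_trans ltr01) ->.
Qed.

Lemma mip_feasible_delta_gt0 {lam sm sp delta alpha gamma} :
  mip_feasible X Y E o rho lam sm sp delta alpha gamma ->
  (0 < mip_obj alpha gamma)%N -> 0 < delta.
Proof.
move=> feas; have [[_ _ Se _] [[_ gamma_le] [lam_ge0 _ _ delta_ge0]]] := feas.
rewrite lt_def delta_ge0 andbT; apply: contraTneq => delta0.
have lam0 k : lam k = 0.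
  by apply: (psumr_eq0P (P := xpredT)) => //; move: Se; rewrite delta0 subr0.
have npos0 : npos lam = 0%N by apply: eq_card0 => k; rewrite inE lam0 ltxx.
move: gamma_le (mip_obj_le_npos feas); rewrite npos0 delta0 -leqNgt.
by case: (gamma); rewrite ?ler10.
Qed.

Lemma Omega_of_mip_feasible {lam sm sp delta alpha gamma} :
  mip_feasible X Y E o rho lam sm sp delta alpha gamma -> 0 < delta ->
  in_Omega X Y E o rho (fun k => lam k / delta).
Proof.
move=> [eqs [_ [lam_ge0 sm_ge0 sp_ge0 _]]] delta_gt0.
have inv_ge0 : 0 <= delta^-1 by rewrite invr_ge0 ltW.
exists (fun i => sm i / delta), (fun r => sp r / delta).
apply/system_S_homogenized; split; first by split=> *; apply: mulr_ge0.
by have := homogenized_SZ delta^-1 eqs; rewrite divff ?gt_eqF.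
Qed.

End MaximalSupport.
End RamModel.

Theorem theorem1 (R : realFieldType) (m s n : nat)
  (X : 'M[R]_(m, n)) (Y : 'M[R]_(s, n))
  (HX : forall i j, 0 <= X i j) (HY : forall r j, 0 <= Y r j)
  (E : {set 'I_n}) (HE : forall j, j \in E <-> ram_efficient X Y j)
  (o : 'I_n) (rho : R) (Hrho : ram_value X Y o rho)
  (lam : Eidx E -> R) (sm : 'I_m -> R) (sp : 'I_s -> R) (delta : R)
  (alpha : Eidx E -> bool) (gamma : bool) :
  mip_optimal X Y E o rho lam sm sp delta alpha gamma ->
  maximal_in_Omega X Y E o rho (fun k => lam k / delta).
Proof.
move=> [feas opt].
have npos_lt_obj l : in_Omega X Y E o rho l -> (npos l < mip_obj alpha gamma)%N.
  move=> /mip_feasible_of_Omega [lam' [sm' [sp' [delta' [alpha' [feas' <-]]]]]].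
  exact: opt feas'.
have [l0 Omega_l0] := ram_optimal_in_Omega Hrho (fun j => (HE j).2).
have obj_gt0 : (0 < mip_obj alpha gamma)%N.
  exact: leq_ltn_trans (leq0n _) (npos_lt_obj _ Omega_l0).
have delta_gt0 := mip_feasible_delta_gt0 feas obj_gt0.
split; first exact: Omega_of_mip_feasible feas delta_gt0.
move=> l /npos_lt_obj /leq_trans/(_ (mip_obj_le_npos feas)).
by rewrite npos_mulr ?invr_gt0 //; case: (gamma); rewrite ?addn1 ?addn0 ?ltnS // => /ltnW.
Qed.
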